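(* Let $I$ be a set of players, for each $i\in I$ let $G_i$ be a compact convex subset of a Hausdorff locally convex topological vector space, and let $G=(G_i,P_i,Q_i)_{i\in I}$ be a general qualitative game satisfying property $T$, where $P_i,Q_i:\prod_{j\in I}G_j\to 2^{G_i}$ satisfy for each $i\in I$: (i) $y_i\in Q_i(y_i,x_{-i})$ for each $y_i\in G_i$ and each $x_{-i}\in G_{-i}$; (ii) $Q_i$ has convex closed values; (iii) $x_i\notin \mathrm{cl}\,P_i(x)$ for each $x\in\prod_{j\in I}G_j$; (iv) $P_i$ is lower semicontinuous with open and convex values in $G_i$. Then: (a) if $G\to^* H$ and there exist $i\in I$ and $x_i,y_i\in G_i$ with $y_i\succ_H x_i$, then there exists $x_i^*\in H_i$ such that $x_i^*\succ_H x_i$ and $z_i\not\succ_H x_i^*$ for all $z_i\in G_i$; (b) if $M$ is a nonempty maximal $(\to^* )$-reduction of $G$, then $M$ is the unique maximal $(\to^* )$-reduction of $G$.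
   Context: $I$ is a nonempty set; $X=\prod_{j\in I}G_j$, $G_{-i}=\prod_{j\ne i}G_j$, $x=(x_i,x_{-i})$. A general qualitative game is $G=(G_i,P_i,Q_i)_{i\in I}$ with correspondences $P_i,Q_i:X\to 2^{G_i}$. It satisfies property $T$ if for each $i$ and each $x\in X$: $P_i(x)\subseteq Q_i(x)$, and $y_i\in P_i(x)$ implies $Q_i(y_i,x_{-i})\subseteq P_i(x)$. A pairing of $G$ is a family $H=(H_i)_{i\in I}$ with $H_i\subseteq G_i$ (the $P_i$ restricted to $\prod_jH_j$); $H_{-i}=\prod_{j\ne i}H_j$; $H$ is nonempty if every $H_i\neq\emptyset$. For $x_i,y_i\in G_i$: $y_i\succ_H x_i$ iff $H_{-i}\neq\emptyset$ and $y_i\in P_i(x_i,x_{-i})$ for all $x_{-i}\in H_{-i}$. For pairings $R,S$ with $S_i\subseteq R_i$ for all $i$: $R\to S$ means for every $i$ and $x_i\in R_i\setminus S_i$, $\bigcap_{x_{-i}\in R_{-i}}P_i(x_i,x_{-i})\ne\emptyset$; it is fast if moreover for every $i$ and $x_i\in R_i$, $\bigcap_{x_{-i}\in R_{-i}}P_i(x_i,x_{-i})\neq\emptyset$ implies $x_i\notin S_i$. $G\to^*H$ means there is a finite or countably infinite sequence of pairings $R^0=G,R^1,\dots$ with $R^t\to R^{t+1}$ fast for each $t$ and $H_i=\bigcap_tR^t_i$ for each $i$. $H$ is a maximal $(\to^* )$-reduction of $G$ if $G\to^*H$ and, for pairings $H'$ with $H'_i\subseteq H_i$, $H\to H'$ holds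 only for $H'=H$. *)

From HB Require Import structures.
From mathcomp Require Import all_boot all_order all_algebra.
From mathcomp Require Import all_classical all_reals all_analysis.
Unset Printing Implicit Defensive.
Import Order.TTheory GRing.Theory Num.Theory.
Local Open Scope classical_set_scope.

Section QualitativeGame.
Context {R : realType} {I : Type} (E : I -> tvsType R).

Definition profile := prod_topology (fun j => E j : topologicalType).

(** (y_i, x_{-i}) : replace the i-th coordinate of x by y_i *)
Definition upd (x : profile) (i : I) (yi : E i) : profile :=
  fun j => match pselect (i = j) with
           | left e => eq_rect i (fun k => E k : Type) yi j e
           | right _ => x j
           end.

Definition in_prod (S : forall i, set (E i)) (x : profile) : Prop :=
  forall j, S j (x j).

Definition in_prod_minus (S : forall i, set (E i)) (i : I) (x : profile) : Prop :=
  forall j, j <> i -> S j (x j).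

Definition ropen {T : topologicalType} (A B : set T) : Prop :=
  exists U, open U /\ B = U `&` A.
Definition rclosed {T : topologicalType} (A B : set T) : Prop :=
  exists C, closed C /\ B = C `&` A.

Variables (G : forall i, set (E i)) (P Q : forall i, profile -> set (E i)).

Definition property_T : Prop :=
  forall (i : I) (x : profile), in_prod G x ->
    P i x `<=` Q i x /\
    (forall yi, P i x yi -> Q i (upd x i yi) `<=` P i x).

Definition pairing (H : forall i, set (E i)) : Prop := forall i, H i `<=` G i.

Definition pairing_nonempty (H : forall i, set (E i)) : Prop :=
  forall i, H i !=set0.

Definition succH (H : forall i, set (E i)) (i : I) (xi yi : E i) : Prop :=
  (exists x : profile, in_prod_minus H i x) /\
  (forall x : profile, in_prod_minus H i x -> P i (upd x i xi) yi).

(** bigcap_{x_{-i} in R_{-i}} P_i(x_i, x_{-i}) is nonempty (intersection taken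
    inside G_i, so that the empty intersection is G_i) *)
Definition dominated (Rp : forall i, set (E i)) (i : I) (xi : E i) : Prop :=
  exists yi, G i yi /\
    forall x : profile, in_prod_minus Rp i x -> P i (upd x i xi) yi.

Definition arrow (Rp S : forall i, set (E i)) : Prop :=
  (forall i, S i `<=` Rp i) /\
  (forall i xi, Rp i xi -> ~ S i xi -> dominated Rp i xi).

Definition arrow_fast (Rp S : forall i, set (E i)) : Prop :=
  arrow Rp S /\ (forall i xi, Rp i xi -> dominated Rp i xi -> ~ S i xi).

(** G ->* H : a finite (indices 0..n, when N = Some n) or countably infinite
    (N = None) sequence of pairings R^0 = G, R^1, ... with R^t -> R^(t+1) fast,
    and H_i = bigcap_t R^t_i *)
Definition in_range (N : option nat) (t : nat) : Prop :=
  match N with None => True | Some n => (t <= n)%N end.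

Definition reduces_to (H : forall i, set (E i)) : Prop :=
  exists (N : option nat) (Rs : nat -> forall i, set (E i)),
    (forall i, Rs 0%N i = G i) /\
    (forall t, in_range N t.+1 -> arrow_fast (Rs t) (Rs t.+1)) /\
    (forall i, H i = [set xi | forall t, in_range N t -> Rs t i xi]).

Definition maximal_reduction (H : forall i, set (E i)) : Prop :=
  reduces_to H /\
  forall H' : forall i, set (E i), (forall i, H' i `<=` H i) ->
    arrow H H' -> forall i, H' i = H i.

End QualitativeGame.

Arguments profile {R I} E.
Arguments upd {R I E} x i yi.
Arguments in_prod {R I E} S x.
Arguments in_prod_minus {R I E} S i x.
Arguments ropen {T} A B.
Arguments rclosed {T} A B.
Arguments property_T {R I E} G P Q.
Arguments pairing {R I E} G H.
Arguments pairing_nonempty {R I E} H.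
Arguments succH {R I E} P H i xi yi.
Arguments dominated {R I E} G P Rp i xi.
Arguments arrow {R I E} G P Rp S.
Arguments arrow_fast {R I E} G P Rp S.
Arguments in_range N t.
Arguments reduces_to {R I E} G P H.
Arguments maximal_reduction {R I E} G P H.

From HB Require Import structures.
From mathcomp Require Import all_boot all_order all_algebra.
From mathcomp Require Import all_classical all_reals all_analysis.
Import Order.TTheory GRing.Theory Num.Theory.
Local Open Scope classical_set_scope.

(* (b) A fast step R -> S is forced: S_i is exactly R_i minus its dominated
   strategies.  Hence any ->*-reduction is an initial segment of the iterated
   elimination of dominated strategies, and maximality of the reduction
   forces that segment to have stabilised, so every maximal reduction is the
   intersection of the whole iteration.
   (a) By property T and (iii), "y_i >_H x_i" is a strict partial order on
   G_i.  Along a chain without maximum, the sets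
   G_i /\ cap_{x_{-i} in H_{-i}} cl Q_i(c, x_{-i}) have the finite
   intersection property, and by (ii) and property T any common point lies
   above the whole chain; compactness and Zorn's lemma then give a maximal
   element above x_i, which is never dominated and so survives every
   reduction step. *)

Lemma compact_In0_nonempty (T : topologicalType) (A : set T) (J : choiceType)
    (D : set J) (f : J -> set T) :
  A !=set0 -> compact A -> closed_fam_of A D f -> finI D f ->
  \bigcap_(j in D) f j !=set0.
Proof.
(* [compact_In0] is stated for pointed spaces; any point of [A] will do. *)
move=> [a0 _] cA.
pose pT : ptopologicalType := HB.pack_for ptopologicalType T (isPointed.Build T a0).
have : @compact pT A := cA.
by rewrite compact_In0; apply.
Qed.

Lemma rclosed_closure (T : topologicalType) (A B : set T) :
  rclosed A B -> A `&` closure B `<=` B.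
Proof.
move=> [C [Ccl ->]] z [Az clz]; split=> //.
rewrite (closure_id C).1 //; apply: closureS clz; apply: subIsetl.
Qed.

Section StrictChains.
Variables (T : eqType) (lt : T -> T -> Prop).
Hypothesis lt_trans : forall a b c, lt a b -> lt b c -> lt a c.

Definition strict_chain (C : set T) :=
  forall c m, C c -> C m -> c = m \/ lt c m \/ lt m c.

Definition is_ub (C : set T) (z : T) := forall c, C c -> c = z \/ lt c z.

Lemma strict_chain_seq_ub (C : set T) (s : seq T) :
  strict_chain C -> C !=set0 -> {subset s <= C} ->
  exists2 m, C m & forall c, c \in s -> c = m \/ lt c m.
Proof.
move=> Cch [a0 Ca0]; elim: s => [|a s IH] sC; first by exists a0.
have Ca : C a by rewrite -in_setE; apply: sC; rewrite mem_head.
have [|m Cm m_ub] := IH; first by move=> c cs; apply: sC; rewrite in_cons cs orbT.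
case: (Cch a m Ca Cm) => [->|[am|ma]].
- by exists m => // c; rewrite in_cons => /orP[/eqP ->|/m_ub]; [left|].
- by exists m => // c; rewrite in_cons => /orP[/eqP ->|/m_ub]; [right|].
- exists a => // c; rewrite in_cons => /orP[/eqP ->|/m_ub [->|cm]]; [by left|by right|].
  by right; apply: lt_trans cm ma.
Qed.

Lemma strict_Zorn (U : set T) :
  (forall a, ~ lt a a) -> U !=set0 ->
  (forall C, C `<=` U -> C !=set0 -> strict_chain C -> exists2 z, U z & is_ub C z) ->
  exists2 t, U t & forall z, U z -> ~ lt t z.
Proof.
move=> lt_irr [u0 Uu0] chain_ub.
pose V := {x : T | U x}.
pose le (a b : V) := `[< sval a = sval b \/ lt (sval a) (sval b) >].
have [||A Atot|t t_max] := @ZL_preorder V (exist _ u0 Uu0) le.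
- by move=> a; apply/asboolP; left.
- move=> a b c /asboolP ab /asboolP bc; apply/asboolP.
  case: ab bc => [->|ab] [<-|bc]; [by left|by right|by right|].
  by right; apply: lt_trans ab bc.
- have [[a Aa]|A0] := pselect (A !=set0); last first.
    by exists (exist _ u0 Uu0) => s As; exfalso; apply: A0; exists s.
  have [|||z Uz z_ub] := chain_ub (sval @` A).
  + by move=> _ [x _ <-]; apply: svalP.
  + by exists (sval a), a.
  + move=> _ _ [c Ac <-] [m Am <-].
    by case: (Atot c m Ac Am) => /asboolP[->|h]; [left|right; left|left|right; right].
  exists (exist _ z Uz) => s As; apply/asboolP.
  by case: (z_ub (sval s)) => [|->|]; [exists s|left|right].
- exists (sval t); first by apply: svalP.
  move=> z Uz tz; have /asboolP := t_max (exist _ z Uz) (asboolT (or_intror tz)).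
  by move=> /= [zt|zt]; apply: (lt_irr (sval t)); [rewrite -{2}zt|apply: lt_trans tz zt].
Qed.

End StrictChains.
Arguments strict_chain {T} lt C.
Arguments is_ub {T} lt C z.
Arguments strict_chain_seq_ub {T lt} lt_trans {C} s.
Arguments strict_Zorn {T lt} lt_trans {U}.

Section CompactChains.
Variables (T : topologicalType) (A : set T) (lt : T -> T -> Prop) (K : T -> set T).
Hypotheses (A_compact : compact A)
  (lt_trans : forall a b c, lt a b -> lt b c -> lt a c)
  (K_closed : forall c, closed (K c))
  (K_refl : forall c, A c -> K c c)
  (K_lt : forall c m, A c -> lt c m -> K c m)
  (K_above : forall c c', A c -> lt c c' -> A `&` K c' `<=` lt c).

Lemma compact_chain_ub (C : set T) :
  C `<=` A -> C !=set0 -> strict_chain lt C -> exists2 z, A z & is_ub lt C z.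
Proof.
move=> CA C0 Cch.
have [[m Cm m_ub]|no_max] := pselect (exists2 m, C m & is_ub lt C m).
  by exists m => //; apply: CA.
have above c : C c -> exists2 c', C c' & lt c c'.
  move=> Cc; apply: contrapT => nc; apply: no_max; exists c => // d Cd.
  case: (Cch d c Cd Cc) => [|[]]; [by left|by right|].
  by move=> cd; exfalso; apply: nc; exists d.
have [a0 Ca0] := C0.
have [z Kz] : \bigcap_(c in C) (A `&` K c) !=set0.
  apply: (@compact_In0_nonempty _ A _ C (fun c => A `&` K c) _ A_compact).
  - by exists a0; apply: CA.
  - by exists K.
  move=> D' D'C.
  have [m Cm m_ub] := strict_chain_seq_ub lt_trans (finmap.enum_fset D') Cch C0 D'C.
  exists m => c /= cD'; split; first by apply: CA.
  have Cc : C c by rewrite -in_setE; apply: D'C.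
  by case: (m_ub c cD') => [<-|cm]; [apply: K_refl|apply: K_lt cm]; apply: CA.
exists z; first by have [] := Kz a0 Ca0.
move=> c Cc; right; have [c' Cc' cc'] := above c Cc.
by apply: K_above (CA c Cc) cc' _ (Kz c' Cc').
Qed.

End CompactChains.
Arguments compact_chain_ub {T A lt K}.

Section Profiles.
Context {R : realType} {I : Type} {E : I -> tvsType R}.

Lemma upd_same (x : profile E) i (y : E i) : upd x i y i = y.
Proof.
rewrite /upd; case: (pselect (i = i)) => [e|//].
by rewrite (Prop_irrelevance e erefl).
Qed.

Lemma upd_other (x : profile E) i (y : E i) j : i <> j -> upd x i y j = x j.
Proof. by rewrite /upd; case: (pselect (i = j)). Qed.

Lemma upd_upd (x : profile E) i (a b : E i) : upd (upd x i a) i b = upd x i b.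
Proof. by apply: functional_extensionality_dep => j; rewrite /upd; case: pselect. Qed.

Lemma in_prod_upd (S : forall i, set (E i)) (x : profile E) i (y : E i) :
  in_prod_minus S i x -> S i y -> in_prod S (upd x i y).
Proof.
move=> Sx Sy j; have [<-|ij] := pselect (i = j); first by rewrite upd_same.
by rewrite upd_other //; apply: Sx => ji; apply: ij.
Qed.

Lemma in_prod_minusS (S S' : forall i, set (E i)) i (x : profile E) :
  (forall j, S j `<=` S' j) -> in_prod_minus S i x -> in_prod_minus S' i x.
Proof. by move=> SS' Sx j ji; apply: SS'; apply: Sx. Qed.

End Profiles.

Lemma in_range_S {N t} : in_range N t.+1 -> in_range N t.
Proof. by case: N => //= n; apply: ltnW. Qed.

Lemma in_range0 N : in_range N 0.
Proof. by case: N. Qed.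

Section Reductions.
Context {R : realType} {I : Type} {E : I -> tvsType R}.
Variables (G : forall i, set (E i)) (P : forall i, profile E -> set (E i)).

Definition elim_dominated (Rp : forall i, set (E i)) : forall i, set (E i) :=
  fun i => [set xi | Rp i xi /\ ~ dominated G P Rp i xi].

Definition iterated_elim (t : nat) : forall i, set (E i) := iter t elim_dominated G.

Lemma arrow_fast_elim {Rp S} : arrow_fast G P Rp S -> S = elim_dominated Rp.
Proof.
move=> [[SR RS_dom] fast]; apply: functional_extensionality_dep => i.
apply/seteqP; split=> [xi Sxi|xi [Rxi ndom]].
  by split; [apply: SR|move/(fast i xi (SR i xi Sxi))].
by apply: contrapT => nSxi; apply/ndom/RS_dom.
Qed.

Lemma arrow_elim Rp : arrow G P Rp (elim_dominated Rp).
Proof.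
split=> [i xi []//|i xi Rxi nelim].
by apply: contrapT => ndom; apply: nelim.
Qed.

Lemma reduction_seq_iterated {N} {Rs : nat -> forall i, set (E i)} :
  (forall i, Rs 0%N i = G i) ->
  (forall t, in_range N t.+1 -> arrow_fast G P (Rs t) (Rs t.+1)) ->
  forall t, in_range N t -> Rs t = iterated_elim t.
Proof.
move=> Rs0 Rs_fast; elim=> [_|t IH Nt].
  by apply: functional_extensionality_dep => i; rewrite Rs0.
by rewrite (arrow_fast_elim (Rs_fast t Nt)) IH //; apply: in_range_S.
Qed.

Lemma iterated_elim_decr s t i : (s <= t)%N -> iterated_elim t i `<=` iterated_elim s i.
Proof.
elim: t => [|t IH]; first by rewrite leqn0 => /eqP ->.
rewrite leq_eqVlt => /orP[/eqP -> //|/IH st xi [/st]//].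
Qed.

Lemma iterated_elim_stable {n} :
  elim_dominated (iterated_elim n) = iterated_elim n ->
  forall t, (n <= t)%N -> iterated_elim t = iterated_elim n.
Proof.
move=> stable; elim=> [|t IH]; first by rewrite leqn0 => /eqP ->.
rewrite leq_eqVlt => /orP[/eqP <- //|nt].
by rewrite /iterated_elim iterS -/(iterated_elim t) IH.
Qed.

Lemma reduces_to_sub H : reduces_to G P H -> forall i, H i `<=` G i.
Proof.
move=> [N [Rs [Rs0 [_ HRs]]]] i xi.
by rewrite HRs -Rs0 => /(_ 0%N (in_range0 N)).
Qed.

Lemma maximal_reduction_iterated H : maximal_reduction G P H ->
  forall i, H i = [set xi | forall t, iterated_elim t i xi].
Proof.
move=> [[N [Rs [Rs0 [Rs_fast HRs]]]] H_max] i.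
have Rs_iter := reduction_seq_iterated Rs0 Rs_fast.
case: N Rs_fast HRs Rs_iter => [n|] Rs_fast HRs Rs_iter; last first.
  rewrite HRs; apply/seteqP; split=> xi Hxi t.
    by rewrite -Rs_iter //; apply: Hxi.
  by rewrite Rs_iter.
have Hn : H = iterated_elim n.
  apply: functional_extensionality_dep => j; rewrite HRs; apply/seteqP; split=> xi Hxi.
    by rewrite -Rs_iter; [apply: Hxi|]; rewrite /= leqnn.
  by move=> t nt; rewrite Rs_iter //; apply: iterated_elim_decr nt _ Hxi.
rewrite Hn in H_max *.
have stable : elim_dominated (iterated_elim n) = iterated_elim n.
  apply: functional_extensionality_dep => j; apply: H_max; last by apply: arrow_elim.
  by move=> k xi [].
apply/seteqP; split=> [xi Hxi t|xi Hxi]; last by apply: Hxi.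
have [nt|tn] := leqP n t; first by rewrite (iterated_elim_stable stable t nt).
by apply: iterated_elim_decr (ltnW tn) _ Hxi.
Qed.

Lemma undominated_mem_reduction H i (xi : E i) : reduces_to G P H -> G i xi ->
  (exists x, in_prod_minus H i x) -> (forall zi, G i zi -> ~ succH P H i xi zi) ->
  H i xi.
Proof.
move=> [N [Rs [Rs0 [Rs_fast HRs]]]] Gxi H0 xi_max; rewrite HRs.
elim=> [_|t IH Nt]; first by rewrite Rs0.
have Nt' := in_range_S Nt; have Rxi := IH Nt'.
apply: contrapT => nRxi; have [yi [Gyi dom]] := (Rs_fast t Nt).1.2 i xi Rxi nRxi.
apply: (xi_max yi Gyi); split=> // x Hx; apply: dom.
by apply: in_prod_minusS Hx => j xj; rewrite HRs => /(_ t Nt').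
Qed.

End Reductions.
Arguments reduces_to_sub {R I E G P H}.
Arguments maximal_reduction_iterated {R I E G P H}.
Arguments undominated_mem_reduction {R I E G P H i xi}.

Section BetterReplies.
Context {R : realType} {I : Type} {E : I -> tvsType R}.
Variables (G : forall i, set (E i)) (P Q : forall i, profile E -> set (E i)).
Variables (H : forall i, set (E i)) (i : I).
Hypotheses (G_T : property_T G P Q) (H_sub : forall j, H j `<=` G j)
  (Gi_compact : compact (G i))
  (Q_self : forall (yi : E i) x, G i yi -> in_prod_minus G i x -> Q i (upd x i yi) yi)
  (Q_rclosed : forall x, in_prod G x -> rclosed (G i) (Q i x))
  (P_irrefl : forall x, in_prod G x -> ~ closure (P i x) (x i)).

Definition better (a b : E i) := G i a /\ G i b /\ succH P H i a b.

Let in_prod_updH {x a} : in_prod_minus H i x -> G i a -> in_prod G (upd x i a).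
Proof. by move=> Hx; apply: in_prod_upd; apply: in_prod_minusS Hx. Qed.

Lemma P_sub_Q {x a} : in_prod_minus H i x -> G i a ->
  P i (upd x i a) `<=` Q i (upd x i a).
Proof. by move=> Hx Ga; apply: (G_T _ _ (in_prod_updH Hx Ga)).1. Qed.

Lemma Q_sub_P {x a b} : in_prod_minus H i x -> G i a -> P i (upd x i a) b ->
  Q i (upd x i b) `<=` P i (upd x i a).
Proof.
move=> Hx Ga Pb; rewrite -(upd_upd x i a b).
by apply: (G_T _ _ (in_prod_updH Hx Ga)).2.
Qed.

Lemma better_trans {a b c} : better a b -> better b c -> better a c.
Proof.
move=> [Ga [Gb [H0 ab]]] [_ [Gc [_ bc]]]; split=> //; split=> //; split=> // x Hx.
by apply: (Q_sub_P Hx Ga (ab x Hx)); apply: (P_sub_Q Hx Gb _ (bc x Hx)).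
Qed.

Lemma better_irrefl a : ~ better a a.
Proof.
move=> [Ga [_ [[x Hx] aa]]]; apply: (P_irrefl _ (in_prod_updH Hx Ga)).
by rewrite upd_same; apply: subset_closure; apply: aa.
Qed.

(* By (i) and property T, [Q_upper c] contains [c] and everything better
   than [c]; by (ii) and property T, its points in [G i] are better than
   everything below [c]. *)
Definition Q_upper (c : E i) : set (E i) :=
  \bigcap_(x in in_prod_minus H i) closure (Q i (upd x i c)).

Lemma Q_upper_closed c : closed (Q_upper c).
Proof. by apply: closed_bigI => x _; apply: closed_closure. Qed.

Lemma Q_upper_refl c : G i c -> Q_upper c c.
Proof.
move=> Gc x Hx; apply: subset_closure; apply: (Q_self _ _ Gc).
by apply: in_prod_minusS Hx.
Qed.

Lemma Q_upper_better c m : G i c -> better c m -> Q_upper c m.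
Proof.
move=> Gc [_ [Gm [_ cm]]] x Hx; apply: subset_closure.
by apply: (P_sub_Q Hx Gc _ (cm x Hx)).
Qed.

Lemma Q_upper_above c c' : G i c -> better c c' -> G i `&` Q_upper c' `<=` better c.
Proof.
move=> Gc [_ [Gc' [H0 cc']]] z [Gz Qz]; split=> //; split=> //; split=> // x Hx.
apply: (Q_sub_P Hx Gc (cc' x Hx)); apply: rclosed_closure.
  by apply: Q_rclosed; apply: in_prod_updH.
by split=> //; apply: Qz.
Qed.

Lemma exists_maximal_better xi : (exists yi, better xi yi) ->
  exists2 t, better xi t & forall zi, G i zi -> ~ succH P H i t zi.
Proof.
move=> xi0; have [|t xt t_max] := strict_Zorn (@better_trans) better_irrefl xi0.
  move=> C C_sub C0 Cch.
  have [|z Gz z_ub] := compact_chain_ub Gi_compact (@better_trans) Q_upper_closed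
    Q_upper_refl Q_upper_better Q_upper_above C _ C0 Cch.
    by move=> c /C_sub [_ []].
  exists z => //; have [a0 Ca0] := C0.
  case: (z_ub a0 Ca0) => [<-|a0z]; first by apply: C_sub.
  by apply: (better_trans (C_sub _ Ca0) a0z).
have [_ [Gt _]] := xt.
exists t => // zi Gzi tzi; have tz : better t zi by [].
by apply: (t_max zi _ tz); apply: (better_trans xt tz).
Qed.

End BetterReplies.
Arguments exists_maximal_better {R I E G P Q H i}.

Theorem corollary2 (R : realType) (I : Type) (E : I -> tvsType R)
  (G : forall i, set (E i)) (P Q : forall i, profile E -> set (E i)) :
  inhabited I ->
  (forall i, hausdorff_space (E i)) ->
  (forall i, compact (G i)) ->
  (forall i, convex_set (G i : set (convex_lmodType (E i)))) ->
  (* P_i, Q_i : prod_j G_j -> 2^{G_i} *)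
  (forall i x, in_prod G x -> P i x `<=` G i /\ Q i x `<=` G i) ->
  property_T G P Q ->
  (* (i) *)
  (forall i (yi : E i) x, G i yi -> in_prod_minus G i x -> Q i (upd x i yi) yi) ->
  (* (ii) *)
  (forall i x, in_prod G x ->
     convex_set (Q i x : set (convex_lmodType (E i))) /\ rclosed (G i) (Q i x)) ->
  (* (iii) *)
  (forall i x, in_prod G x -> ~ closure (P i x) (x i)) ->
  (* (iv) *)
  (forall i, forall V : set (E i), ropen (G i) V ->
     ropen (in_prod G) [set x | in_prod G x /\ P i x `&` V !=set0]) ->
  (forall i x, in_prod G x ->
     ropen (G i) (P i x) /\ convex_set (P i x : set (convex_lmodType (E i)))) ->
  (* (a) *)
  (forall H, reduces_to G P H ->
     forall i (xi yi : E i), G i xi -> G i yi -> succH P H i xi yi ->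
     exists xs, H i xs /\ succH P H i xi xs /\
       forall zi, G i zi -> ~ succH P H i xs zi) /\
  (* (b) *)
  (forall M, pairing_nonempty M -> maximal_reduction G P M ->
     forall M', maximal_reduction G P M' -> forall i, M' i = M i).
Proof.
move=> _ _ G_compact _ _ G_T Q_self Q_props P_irrefl _ _; split.
  move=> H redH i xi yi Gxi Gyi xy.
  have Q_rclosed x (Gx : in_prod G x) := (Q_props i x Gx).2.
  have xi_yi : better G P H i xi yi by [].
  have [t [_ [Gt xt]] t_max] := exists_maximal_better G_T (reduces_to_sub redH)
    (G_compact i) (Q_self i) Q_rclosed (P_irrefl i) xi (ex_intro _ yi xi_yi).
  by exists t; split=> //; apply: (undominated_mem_reduction redH Gt xy.1 t_max).
move=> M _ maxM M' maxM' i.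
by rewrite (maximal_reduction_iterated maxM) (maximal_reduction_iterated maxM').
Qed.
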